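(* Let $m\ge 2$, $R>0$, $\alpha\le 0$, and $h\in C^2([0,\infty))$ with $h''(r)\ge 0$ on $(0,\infty)$. Let $\mu_1$ be the first eigenvalue of the problem $$w''+\Big(\frac{m-1}{r}+h'(r)\Big)w'+\Big(\lambda-\frac{m-1}{r^2}\Big)w=0\ \text{ in }(0,R),\qquad w(0)=0,\quad w'(R)+\alpha w(R)=0,$$ and let $g$ be a corresponding eigenfunction, chosen positive on $(0,R]$ with $g'(0)=1$. Then: (1) $g'(r)>0$ for all $r\in(0,R)$; (2) if in addition $\alpha\ge -\frac2R$, then $g'(r)\ge -\alpha g(r)$ for all $r\in(0,R]$.
   Context: $\mu_1$ admits the variational characterization $\mu_1=\inf\{\frac{\int_0^R(g'^2+\frac{m-1}{r^2}g^2)r^{m-1}e^{h(r)}dr+\alpha g(R)^2R^{m-1}e^{h(R)}}{\int_0^R g^2r^{m-1}e^{h(r)}dr}: g\in W^{1,2}((0,R)),\ g(0)=0\}$. *)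

From Stdlib Require Import Reals Lra.
From Coquelicot Require Import Coquelicot.
Open Scope R_scope.

Definition C2_on_nonneg (h : R -> R) : Prop :=
  forall r, 0 <= r ->
    ex_derive h r /\ ex_derive (Derive h) r /\
    continuous (Derive (Derive h)) r.

Definition has_right_deriv (w : R -> R) (a d : R) : Prop :=
  filterlim (fun r => (w r - w a) / (r - a)) (at_right a) (locally d).

Definition is_eigenfunction (m : nat) (Rad alpha : R) (h : R -> R)
    (lam : R) (w : R -> R) : Prop :=
  (forall r, 0 < r <= Rad -> ex_derive w r) /\
  (forall r, 0 < r < Rad -> ex_derive (Derive w) r) /\
  (forall r, 0 < r < Rad ->
     Derive (Derive w) r + ((INR m - 1) / r + Derive h r) * Derive w r
     + (lam - (INR m - 1) / r ^ 2) * w r = 0) /\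
  w 0 = 0 /\
  filterlim w (at_right 0) (locally 0) /\
  Derive w Rad + alpha * w Rad = 0 /\
  (exists r, 0 < r <= Rad /\ w r <> 0).

Definition is_eigenvalue (m : nat) (Rad alpha : R) (h : R -> R) (lam : R) : Prop :=
  exists w, is_eigenfunction m Rad alpha h lam w.

Definition is_first_eigenvalue (m : nat) (Rad alpha : R) (h : R -> R) (mu : R) : Prop :=
  is_eigenvalue m Rad alpha h mu /\
  (forall lam, is_eigenvalue m Rad alpha h lam -> mu <= lam).

From Stdlib Require Import Reals Lra.
From Coquelicot Require Import Coquelicot.
Open Scope R_scope.

(* With n = m - 1 and 0 <= b <= 2/R, consider the flux
   W = r^n e^(h + b r) (g' - b g).  The equation gives W' = r^n e^(h + b r) g phi
   with phi = n/r^2 - b n/r - b h' - b^2 - mu, and phi is strictly decreasing on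
   (0, R] because b R <= 2 and h'' >= 0.  If W(r1) <= 0 at an interior point r1,
   either phi(r1) > 0, so W <= 0 on (0, r1] and e^(-b r) g is nonincreasing there,
   against g(0+) = 0 < g; or phi(r1) <= 0, so W stays below a negative constant
   near R, against g'(R) - b g(R) >= 0.  Hence g' > b g inside; b = 0 gives (1)
   and b = -alpha gives (2). *)

Lemma MVT_interior (f df : R -> R) (a b : R) : a < b ->
  (forall x, a < x < b -> is_derive f x (df x)) ->
  (forall x, a <= x <= b -> continuity_pt f x) ->
  exists c, a < c < b /\ f b - f a = df c * (b - a).
Proof.
intros Hab Hd Hc.
pose (pr1 := fun c (P : a < c < b) =>
  exist (fun l => derivable_pt_abs f c l) (df c) (proj1 (is_derive_Reals _ _ _) (Hd c P))).
pose (pr2 := fun c (_ : a < c < b) => derivable_pt_id c).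
destruct (MVT f id a b pr1 pr2 Hab Hc) as [c [Hc_in Hc_eq]].
{ intros; apply derivable_continuous_pt, derivable_pt_id. }
exists c; split; [exact Hc_in|].
rewrite derive_pt_id in Hc_eq; unfold id in Hc_eq; simpl in Hc_eq; lra.
Qed.

Lemma is_derive_continuity_pt (f : R -> R) (x l : R) :
  is_derive f x l -> continuity_pt f x.
Proof.
intros Hd; apply continuity_pt_filterlim, (ex_derive_continuous (V := R_NormedModule)).
now exists l.
Qed.

Lemma le_of_is_derive_nonneg (f df : R -> R) (s t : R) : s <= t ->
  (forall x, s <= x <= t -> is_derive f x (df x)) ->
  (forall x, s <= x <= t -> 0 <= df x) ->
  f s <= f t.
Proof.
intros Hst Hd Hpos.
destruct (MVT_gen f s t df) as [c [Hc Heq]];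
  rewrite Rmin_left, Rmax_right in * by exact Hst.
- intros x Hx; apply Hd; lra.
- intros x Hx; apply (is_derive_continuity_pt _ _ _ (Hd x Hx)).
- assert (0 <= df c * (t - s)) by (apply Rmult_le_pos; [apply Hpos|]; lra).
  lra.
Qed.

Lemma ge_of_is_derive_nonpos (f df : R -> R) (s t : R) : s <= t ->
  (forall x, s <= x <= t -> is_derive f x (df x)) ->
  (forall x, s <= x <= t -> df x <= 0) ->
  f t <= f s.
Proof.
intros Hst Hd Hneg.
enough (- f s <= - f t) by lra.
apply (le_of_is_derive_nonneg (fun x => - f x) (fun x => - df x)); [exact Hst| |].
- intros x Hx; apply (is_derive_opp f), Hd, Hx.
- intros x Hx; specialize (Hneg x Hx); lra.
Qed.

Lemma is_derive_le_of_left_bound (f df : R -> R) (a b l M : R) : a < b ->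
  (forall x, a < x < b -> is_derive f x (df x)) ->
  (forall x, a < x < b -> df x <= M) ->
  is_derive f b l -> l <= M.
Proof.
intros Hab Hd Hbound Hb.
destruct (Rle_or_lt l M) as [|HMl]; [assumption|exfalso].
destruct (proj1 (is_derive_Reals _ _ _) Hb (l - M) ltac:(lra)) as [delta Hdelta].
set (k := Rmin delta (b - a) / 2).
assert (Hk : 0 < k <= (b - a) / 2 /\ k < delta).
{ pose proof (cond_pos delta); pose proof (Rmin_l delta (b - a));
    pose proof (Rmin_r delta (b - a)).
  assert (0 < Rmin delta (b - a)) by (apply Rmin_pos; lra).
  unfold k; lra. }
destruct (MVT_interior f df (b - k) b) as [c [Hc Heq]]; [lra| | |].
- intros x Hx; apply Hd; lra.
- intros x Hx; destruct (Req_dec x b) as [->|Hxb].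
  + exact (is_derive_continuity_pt _ _ _ Hb).
  + apply (is_derive_continuity_pt _ _ _ (Hd x ltac:(lra))).
- assert (Hq := Hdelta (- k) ltac:(lra) ltac:(rewrite Rabs_Ropp, Rabs_pos_eq; lra)).
  replace ((f (b + - k) - f b) / - k) with (df c) in Hq
    by (replace (b + - k) with (b - k) by ring; field_simplify_eq; lra).
  assert (df c <= M) by (apply Hbound; lra).
  apply Rabs_def2 in Hq; lra.
Qed.

Lemma is_derive_le_of_left_cont_bound (f df q : R -> R) (a b l : R) : a < b ->
  (forall x, a < x < b -> is_derive f x (df x)) ->
  (forall x, a < x < b -> df x <= q x) ->
  continuity_pt q b ->
  is_derive f b l -> l <= q b.
Proof.
intros Hab Hd Hbound Hq Hb.
destruct (Rle_or_lt l (q b)) as [|Hl]; [assumption|exfalso].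
set (eps := (l - q b) / 2).
destruct (Hq eps ltac:(unfold eps; lra)) as [delta [Hdelta Hnear]].
set (a' := Rmax a (b - delta)).
assert (Ha' : a <= a' < b /\ b - delta <= a').
{ pose proof (Rmax_l a (b - delta)); pose proof (Rmax_r a (b - delta)).
  assert (a' < b) by (apply Rmax_lub_lt; lra).
  unfold a' in *; lra. }
enough (l <= q b + eps) by (unfold eps in *; lra).
apply (is_derive_le_of_left_bound f df a' b); [lra| | |exact Hb].
- intros x Hx; apply Hd; lra.
- intros x Hx.
  assert (Hqx : Rabs (q x - q b) < eps).
  { apply Hnear; split; [split; [exact I|lra]|].
    simpl; unfold R_dist; rewrite Rabs_left; lra. }
  apply Rabs_def2 in Hqx.
  specialize (Hbound x ltac:(lra)); lra.
Qed.

Lemma le_of_lim_right (u : R -> R) (a c y L : R) : a < c ->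
  (forall s, a < s < c -> y <= u s) ->
  filterlim u (at_right a) (locally L) -> y <= L.
Proof.
intros Hac Hle Hu.
apply (filterlim_le (F := at_right a) (fun _ => y) u y L).
- exists (mkposreal (c - a) ltac:(lra)); intros s Hs Has.
  apply Hle; split; [exact Has|].
  apply Rabs_lt_between' in Hs; simpl in Hs; lra.
- apply filterlim_const.
- exact Hu.
Qed.

Section Flux.

Variables (n b mu Rad : R) (h g : R -> R).

Hypothesis n_pos : 0 < n.
Hypothesis b_nonneg : 0 <= b.
Hypothesis b_Rad_le_2 : b * Rad <= 2.
Hypothesis h_deriv : forall r, 0 < r <= Rad -> ex_derive h r.
Hypothesis h_deriv2 : forall r, 0 < r <= Rad -> ex_derive (Derive h) r.
Hypothesis h_convex : forall r, 0 < r <= Rad -> 0 <= Derive (Derive h) r.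
Hypothesis g_deriv : forall r, 0 < r <= Rad -> ex_derive g r.
Hypothesis g_deriv2 : forall r, 0 < r < Rad -> ex_derive (Derive g) r.
Hypothesis g_ode : forall r, 0 < r < Rad ->
  Derive (Derive g) r + (n / r + Derive h r) * Derive g r
  + (mu - n / r ^ 2) * g r = 0.
Hypothesis g_pos : forall r, 0 < r <= Rad -> 0 < g r.

Definition weight (r : R) : R := exp (n * ln r + h r + b * r).

Definition flux (r : R) : R := weight r * (Derive g r - b * g r).

Definition potential (r : R) : R :=
  n / r ^ 2 - b * n / r - b * Derive h r - b ^ 2 - mu.

Definition damped (r : R) : R := exp (- (b * r)) * g r.

Lemma weight_mul_g_pos (r : R) : 0 < r <= Rad -> 0 < weight r * g r.
Proof. intros Hr; apply Rmult_lt_0_compat; [apply exp_pos|apply g_pos, Hr]. Qed.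

Lemma damping_factor_pos (r : R) : 0 < exp (- (b * r)) / weight r.
Proof. apply Rdiv_lt_0_compat; apply exp_pos. Qed.

Lemma is_derive_flux (r : R) : 0 < r < Rad ->
  is_derive flux r (weight r * g r * potential r).
Proof.
intros Hr; unfold flux, weight; auto_derive.
- repeat split; try lra; [apply h_deriv | apply g_deriv2 | apply g_deriv]; lra.
- change (Derive (fun x => Derive g x) r) with (Derive (Derive g) r).
  change (Derive (fun x => h x) r) with (Derive h r).
  change (Derive (fun x => g x) r) with (Derive g r).
  replace (Derive (Derive g) r) with
    (- ((n / r + Derive h r) * Derive g r + (mu - n / r ^ 2) * g r))
    by (specialize (g_ode r Hr); lra).
  unfold potential; field; lra.
Qed.

Lemma is_derive_damped (r : R) : 0 < r <= Rad ->
  is_derive damped r (exp (- (b * r)) / weight r * flux r).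
Proof.
intros Hr; unfold damped, flux; auto_derive.
- apply g_deriv, Hr.
- change (Derive (fun x => g x) r) with (Derive g r).
  field; apply Rgt_not_eq, exp_pos.
Qed.

Lemma Derive_h_le (s t : R) : 0 < s -> s <= t -> t <= Rad ->
  Derive h s <= Derive h t.
Proof.
intros Hs Hst HtR.
apply (le_of_is_derive_nonneg _ (Derive (Derive h))); [exact Hst| |].
- intros x Hx; apply Derive_correct, h_deriv2; lra.
- intros x Hx; apply h_convex; lra.
Qed.

Lemma potential_decreasing (s t : R) : 0 < s -> s < t -> t <= Rad ->
  potential t < potential s.
Proof.
intros Hs Hst HtR.
pose proof (Derive_h_le s t Hs (Rlt_le _ _ Hst) HtR) as Hh.
unfold potential.
set (u := / s); set (v := / t).
assert (Hv : 0 < v) by (apply Rinv_0_lt_compat; lra).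
assert (Hvu : v < u) by (apply Rinv_lt_contravar; nra).
assert (Hbv : b <= 2 * v).
{ unfold v; apply (Rmult_le_reg_r t); [lra|]. field_simplify; nra. }
(* [n/r^2 - b n/r = n u (u - b)] with [u = 1/r], and [u (u - b)] increases on [u >= b/2] *)
assert (n * (u - v) * (u + v - b) > 0) by (apply Rmult_lt_0_compat; nra).
replace (n / s ^ 2 - b * n / s) with (n * u * (u - b)) by (unfold u; field; lra).
replace (n / t ^ 2 - b * n / t) with (n * v * (v - b)) by (unfold v; field; lra).
nra.
Qed.

Lemma potential_le (s t : R) : 0 < s -> s <= t -> t <= Rad ->
  potential t <= potential s.
Proof.
intros Hs Hst HtR; destruct (Req_dec s t) as [->|Hne]; [lra|].
apply Rlt_le, potential_decreasing; lra.
Qed.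

Lemma flux_pos_of_potential_pos (r1 : R) :
  filterlim g (at_right 0) (locally 0) ->
  0 < r1 < Rad -> 0 < potential r1 -> 0 < flux r1.
Proof.
intros g_lim0 Hr1 Hp; apply Rnot_le_lt; intros Hflux.
assert (Hflux_nonpos : forall x, 0 < x <= r1 -> flux x <= 0).
{ intros x Hx; enough (flux x <= flux r1) by lra.
  apply (le_of_is_derive_nonneg _ (fun y => weight y * g y * potential y));
    [lra| |].
  - intros y Hy; apply is_derive_flux; lra.
  - intros y Hy; pose proof (potential_le y r1 ltac:(lra) ltac:(lra) ltac:(lra)).
    apply Rmult_le_pos; [apply Rlt_le, weight_mul_g_pos|]; lra. }
set (x := r1 / 2).
assert (Hdamped : damped x <= 0).
{ apply (le_of_lim_right g 0 x); [unfold x; lra| |exact g_lim0].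
  intros s Hs.
  assert (Hxs : damped x <= damped s).
  { apply (ge_of_is_derive_nonpos _ (fun y => exp (- (b * y)) / weight y * flux y));
      [lra| |].
    - intros y Hy; apply is_derive_damped; unfold x in *; lra.
    - intros y Hy; pose proof (damping_factor_pos y).
      assert (flux y <= 0) by (apply Hflux_nonpos; unfold x in *; lra).
      nra. }
  assert (Hexp : exp (- (b * s)) <= 1).
  { destruct (Req_dec (b * s) 0) as [Hbs|Hbs].
    - rewrite Hbs, Ropp_0, exp_0; lra.
    - rewrite <- exp_0; apply Rlt_le, exp_increasing; nra. }
  pose proof (g_pos s ltac:(unfold x in *; lra)).
  unfold damped at 2 in Hxs; nra. }
pose proof (exp_pos (- (b * x))); pose proof (g_pos x ltac:(unfold x; lra)).
unfold damped in Hdamped; nra.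
Qed.

(* [flux] need not be continuous at [Rad], where only [g] itself is known to be
   differentiable; the boundary condition is reached through [damped'(Rad)]. *)
Lemma flux_pos_of_potential_nonpos (r1 : R) :
  0 <= Derive g Rad - b * g Rad ->
  0 < r1 < Rad -> potential r1 <= 0 -> 0 < flux r1.
Proof.
intros g_boundary Hr1 Hp; apply Rnot_le_lt; intros Hflux.
set (r2 := (r1 + Rad) / 2).
assert (Hr2 : r1 < r2 < Rad) by (unfold r2; lra).
assert (Hflux_r2 : flux r2 < 0).
{ destruct (MVT_interior flux (fun y => weight y * g y * potential y) r1 r2)
    as [c [Hc Heq]]; [lra| | |].
  - intros y Hy; apply is_derive_flux; lra.
  - intros y Hy; apply (is_derive_continuity_pt _ _ _ (is_derive_flux y ltac:(lra))).
  - pose proof (potential_decreasing r1 c ltac:(lra) ltac:(lra) ltac:(lra)).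
    pose proof (weight_mul_g_pos c ltac:(lra)).
    assert (weight c * g c * potential c * (r2 - r1) < 0)
      by (apply Rmult_neg_pos; [nra|lra]).
    lra. }
assert (Hflux_le : forall x, r2 <= x < Rad -> flux x <= flux r2).
{ intros x Hx.
  apply (ge_of_is_derive_nonpos _ (fun y => weight y * g y * potential y)); [lra| |].
  - intros y Hy; apply is_derive_flux; lra.
  - intros y Hy; pose proof (potential_le r1 y ltac:(lra) ltac:(lra) ltac:(lra)).
    pose proof (weight_mul_g_pos y ltac:(lra)); nra. }
set (q := fun y => exp (- (b * y)) / weight y * flux r2).
assert (Hq : exp (- (b * Rad)) / weight Rad * flux Rad <= q Rad).
{ apply (is_derive_le_of_left_cont_bound damped
    (fun y => exp (- (b * y)) / weight y * flux y) q r2); [lra| | | |].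
  - intros y Hy; apply is_derive_damped; lra.
  - intros y Hy; unfold q; pose proof (damping_factor_pos y).
    apply Rmult_le_compat_l; [lra|apply Hflux_le; lra].
  - apply (is_derive_continuity_pt _ _ (Derive q Rad)), Derive_correct.
    unfold q, weight; auto_derive.
    repeat split; [lra|apply h_deriv; lra|apply Rgt_not_eq, exp_pos].
  - apply is_derive_damped; lra. }
assert (0 <= flux Rad) by (apply Rmult_le_pos; [apply Rlt_le, exp_pos|exact g_boundary]).
pose proof (damping_factor_pos Rad).
unfold q in Hq; nra.
Qed.

Lemma mul_lt_Derive (r : R) :
  filterlim g (at_right 0) (locally 0) ->
  0 <= Derive g Rad - b * g Rad ->
  0 < r < Rad -> b * g r < Derive g r.
Proof.
intros g_lim0 g_boundary Hr.
assert (Hflux : 0 < flux r).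
{ destruct (Rlt_or_le 0 (potential r)).
  - apply flux_pos_of_potential_pos; assumption.
  - apply flux_pos_of_potential_nonpos; assumption. }
pose proof (exp_pos (n * ln r + h r + b * r)).
unfold flux, weight in Hflux; nra.
Qed.

End Flux.

Theorem proposition2p2 (m : nat) (Rad alpha : R) (h : R -> R) (mu1 : R) (g : R -> R) :
  (2 <= m)%nat -> 0 < Rad -> alpha <= 0 ->
  C2_on_nonneg h ->
  (forall r, 0 < r -> 0 <= Derive (Derive h) r) ->
  is_first_eigenvalue m Rad alpha h mu1 ->
  is_eigenfunction m Rad alpha h mu1 g ->
  (forall r, 0 < r <= Rad -> 0 < g r) ->
  has_right_deriv g 0 1 ->
  (forall r, 0 < r < Rad -> 0 < Derive g r) /\
  (-2 / Rad <= alpha -> forall r, 0 < r <= Rad -> Derive g r >= - alpha * g r).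
Proof.
intros Hm HRad Halpha Hh Hh_convex _ [Hg1 [Hg2 [Hode [_ [Hg0 [Hbc _]]]]]] Hpos _.
assert (Hn : 0 < INR m - 1) by (apply le_INR in Hm; simpl in Hm; lra).
assert (Hh1 : forall r, 0 < r <= Rad -> ex_derive h r) by (intros r Hr; apply Hh; lra).
assert (Hh2 : forall r, 0 < r <= Rad -> ex_derive (Derive h) r)
  by (intros r Hr; apply Hh; lra).
assert (Hh_convex' : forall r, 0 < r <= Rad -> 0 <= Derive (Derive h) r)
  by (intros r Hr; apply Hh_convex; lra).
pose proof (Hpos Rad ltac:(lra)) as HgRad.
split.
- intros r Hr.
  pose proof (mul_lt_Derive (INR m - 1) 0 mu1 Rad h g Hn (Rle_refl 0) ltac:(lra)
    Hh1 Hh2 Hh_convex' Hg1 Hg2 Hode Hpos r Hg0 ltac:(nra) Hr).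
  lra.
- intros Halpha2 r Hr.
  assert (-2 <= alpha * Rad) by (apply (Rmult_le_compat_r Rad) in Halpha2;
    [field_simplify in Halpha2; lra|lra]).
  destruct (Req_dec r Rad) as [->|Hne]; [lra|].
  pose proof (mul_lt_Derive (INR m - 1) (- alpha) mu1 Rad h g Hn ltac:(lra) ltac:(lra)
    Hh1 Hh2 Hh_convex' Hg1 Hg2 Hode Hpos r Hg0 ltac:(lra) ltac:(lra)).
  lra.
Qed.
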